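(* With the notation of the context, for every $\lambda\in[0,1]$ the state transition matrix $\Phi(\lambda,0)=\exp\!\big(\int_0^\lambda A(\mu)\,d\mu\big)$ of the EDH flow matrix satisfies $$\Phi(\lambda,0)=I+PH^\top R^{-1/2}\big[(I+\lambda D)^{-1/2}-I\big]D^{-1}R^{-1/2}H=I+E\,\Omega(\lambda)\,F^\top,$$ where $\Omega(\lambda)=\mathrm{diag}(\omega_1(\lambda),\dots,\omega_{n_z}(\lambda))$, $\omega_i(\lambda)=\dfrac{(1+\lambda\alpha_i)^{-1/2}-1}{\alpha_i}$.
   Context: $P\in\mathbb{R}^{n_x\times n_x}$, $R\in\mathbb{R}^{n_z\times n_z}$ symmetric positive definite, $H\in\mathbb{R}^{n_z\times n_x}$ of full row rank. $R^{-1/2}$ is the inverse of the symmetric positive definite square root of $R$. The EDH flow matrix is $A(\lambda)=-\tfrac12 PH^\top(\lambda HPH^\top+R)^{-1}H$ for $\lambda\in[0,1]$. Let $D=R^{-1/2}HPH^\top R^{-1/2}=V\Lambda V^\top$ with $V$ orthogonal and $\Lambda=\mathrm{diag}(\alpha_1,\dots,\alpha_{n_z})$, $\alpha_i>0$. Define $E=PH^\top R^{-1/2}V$ and $F^\top=V^\top R^{-1/2}H$. $(I+\lambda D)^{-1/2}$ denotes the inverse of the symmetric positive definite square root of $I+\lambda D$. *)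

From HB Require Import structures.
From mathcomp Require Import all_boot all_order all_algebra.
From mathcomp Require Import all_classical all_reals all_analysis.
Set Implicit Arguments. Unset Strict Implicit. Unset Printing Implicit Defensive.
Import Order.TTheory GRing.Theory Num.Theory.
Import numFieldNormedType.Exports.
Local Open Scope ring_scope.
Local Open Scope classical_set_scope.

Definition sym_posdef (R : realType) (n : nat) (M : 'M[R]_n) : Prop :=
  M^T = M /\ forall x : 'cV[R]_n, x != 0 -> 0 < (x^T *m M *m x) 0 0.

Definition mxpow (R : realType) (n : nat) (M : 'M[R]_n) (k : nat) : 'M[R]_n :=
  iter k (mulmx M) 1%:M.

Definition mxexp (R : realType) (n : nat) (M : 'M[R]_n) : 'M[R]_n :=
  \matrix_(i, j) limn (fun N : nat =>
     (\sum_(k < N) (k`!%:R)^-1 *: mxpow M k) i j).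

Definition mxint (R : realType) (m n : nat) (f : R -> 'M[R]_(m, n)) (a b : R)
  : 'M[R]_(m, n) :=
  \matrix_(i, j) (\int[@lebesgue_measure R]_(x in `[a, b]) f x i j).

Definition edhA (R : realType) (nx nz : nat) (P : 'M[R]_nx) (Rm : 'M[R]_nz)
  (H : 'M[R]_(nz, nx)) (lam : R) : 'M[R]_nx :=
  (- 2^-1) *: (P *m H^T *m invmx (lam *: (H *m P *m H^T) + Rm) *m H).

Definition edhPhi (R : realType) (nx nz : nat) (P : 'M[R]_nx) (Rm : 'M[R]_nz)
  (H : 'M[R]_(nz, nx)) (lam : R) : 'M[R]_nx :=
  mxexp (mxint (edhA P Rm H) 0 lam).

From HB Require Import structures.
From mathcomp Require Import all_boot all_order all_algebra.
From mathcomp Require Import all_classical all_reals all_analysis.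
From mathcomp Require Import ring.
Import Order.TTheory GRing.Theory Num.Theory.
Import numFieldNormedType.Exports.
Set Implicit Arguments. Unset Strict Implicit. Unset Printing Implicit Defensive.
Local Open Scope ring_scope.

(* Writing D = V diag(alpha) V^T, every matrix involved is of the form
   E diag(w) F^T with E := P H^T R^{-1/2} V and F^T := V^T R^{-1/2} H, and
   F^T E = diag(alpha).  Hence A(mu) = E diag(-1/2 (1 + mu alpha_i)^-1) F^T, its
   integral over [0, lambda] is E diag(g) F^T with
   g_i = -1/2 ln(1 + lambda alpha_i) / alpha_i, and the powers of E diag(g) F^T
   collapse to E diag((alpha_i g_i)^k / alpha_i) F^T, so that
   exp (E diag(g) F^T) = I + E diag((exp(alpha_i g_i) - 1) / alpha_i) F^T with
   exp(alpha_i g_i) = (1 + lambda alpha_i)^{-1/2}.  The first closed form then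
   follows because (I + lambda D)^{1/2} = V diag((1 + lambda alpha_i)^{1/2}) V^T
   by uniqueness of positive definite square roots. *)

Definition diagf {R : pzRingType} {n : nat} (w : 'I_n -> R) : 'M[R]_n :=
  diag_mx (\row_i w i).

Section DiagonalFunctions.
Variables (R : comPzRingType) (n : nat).
Implicit Types (u w : 'I_n -> R).

Lemma eq_diagf u w : u =1 w -> diagf u = diagf w.
Proof. by move=> uw; congr diag_mx; apply/rowP => i; rewrite !mxE uw. Qed.

Lemma diagfM u w : diagf u *m diagf w = diagf (fun i => u i * w i).
Proof. by rewrite mulmx_diag; congr diag_mx; apply/rowP => i; rewrite !mxE. Qed.

Lemma diagf1 : diagf (fun _ => 1) = 1%:M :> 'M[R]_n.
Proof. by rewrite -diag_const_mx; congr diag_mx; apply/rowP => i; rewrite !mxE. Qed.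

Lemma diagf0 : diagf (fun _ => 0) = 0 :> 'M[R]_n.
Proof. by apply/matrixP => i j; rewrite !mxE mul0rn. Qed.

Lemma diagfD u w : diagf u + diagf w = diagf (fun i => u i + w i).
Proof. by rewrite /diagf -linearD; congr diag_mx; apply/rowP => i; rewrite !mxE. Qed.

Lemma diagfB u w : diagf u - diagf w = diagf (fun i => u i - w i).
Proof. by rewrite /diagf -linearB; congr diag_mx; apply/rowP => i; rewrite !mxE. Qed.

Lemma diagfZ a w : a *: diagf w = diagf (fun i => a * w i).
Proof. by rewrite /diagf -linearZ; congr diag_mx; apply/rowP => i; rewrite !mxE. Qed.

Lemma mulmx_diagfE m p (A : 'M[R]_(m, n)) w (B : 'M[R]_(n, p)) i j :
  (A *m diagf w *m B) i j = \sum_k A i k * w k * B k j.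
Proof. by rewrite mxE; apply: eq_bigr => k _; rewrite mul_mx_diag !mxE. Qed.

End DiagonalFunctions.

Lemma mulmx1_invmx (R : comUnitRingType) n (A B : 'M[R]_n) :
  A *m B = 1%:M -> invmx A = B.
Proof.
move=> AB; have [uA _] := mulmx1_unit AB.
by rewrite -[B]mul1mx -(mulVmx uA) -mulmxA AB mulmx1.
Qed.

Lemma posdef_unitmx (R : realFieldType) n (M : 'M[R]_n) :
  (forall x : 'cV[R]_n, x != 0 -> 0 < (x^T *m M *m x) 0 0) -> M \in unitmx.
Proof.
move=> pdM; rewrite unitmxE unitfE; apply/negP => /det0P[v v0 vM].
by have := pdM v^T; rewrite trmx_eq0 v0 trmxK vM mul0mx mxE ltxx => /(_ isT).
Qed.

Section OrthogonalConjugation.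
Variables (R : fieldType) (n : nat) (V : 'M[R]_n).
Hypothesis VtV : V^T *m V = 1%:M.

Lemma orthogonal_mulmx_tr : V *m V^T = 1%:M.
Proof. exact: mulmx1C. Qed.

Lemma conj_diagfM u w :
  V *m diagf u *m V^T *m (V *m diagf w *m V^T) =
  V *m diagf (fun i => u i * w i) *m V^T.
Proof. by rewrite !mulmxA -(mulmxA _ V^T V) VtV mulmx1 -(mulmxA V) diagfM. Qed.

Lemma invmx_conj_diagf u w : (forall i, u i * w i = 1) ->
  invmx (V *m diagf u *m V^T) = V *m diagf w *m V^T.
Proof.
move=> uw; apply: mulmx1_invmx.
by rewrite conj_diagfM (eq_diagf uw) diagf1 mulmx1 orthogonal_mulmx_tr.
Qed.

Lemma conj_diagf_scale_add1 (lam : R) w :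
  1%:M + lam *: (V *m diagf w *m V^T) = V *m diagf (fun i => 1 + lam * w i) *m V^T.
Proof.
rewrite -diagfD -diagf1 -diagfZ mulmxDr mulmxDl diagf1 mulmx1.
by rewrite orthogonal_mulmx_tr -scalemxAr -scalemxAl.
Qed.

End OrthogonalConjugation.

Lemma diagf_sqrt_comm (R : rcfType) n (W : 'M[R]_n) (d : 'I_n -> R) :
  W *m diagf d = diagf d *m W ->
  W *m diagf (fun i => Num.sqrt (d i)) = diagf (fun i => Num.sqrt (d i)) *m W.
Proof.
move=> /matrixP Wd; apply/matrixP => i j.
have := Wd i j; rewrite /diagf !mul_mx_diag !mul_diag_mx !mxE mulrC => /eqP.
rewrite -subr_eq0 -mulrBl mulf_eq0 subr_eq0 => /orP[/eqP -> | /eqP Wij].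
  by rewrite mulrC.
by rewrite Wij mulr0 mul0r.
Qed.

Lemma quad_diagf_ge0 (R : realDomainType) n (s : 'I_n -> R) (x : 'cV[R]_n) :
  (forall i, 0 <= s i) -> 0 <= (x^T *m diagf s *m x) 0 0.
Proof.
move=> s_ge0; rewrite mulmx_diagfE; apply: sumr_ge0 => k _.
by rewrite mxE mulrC mulrA mulr_ge0 // -expr2 sqr_ge0.
Qed.

(* W := V^T S V satisfies W^2 = diag d, so it commutes with diag d and hence
   with diag (sqrt d); then (W - diag sqrt d)(W + diag sqrt d) = 0 and the
   second factor is positive definite. *)
Lemma posdef_sqrt_unique (R : realType) n (V S : 'M[R]_n) (d : 'I_n -> R) :
  V^T *m V = 1%:M -> (forall i, 0 <= d i) ->
  sym_posdef S -> S *m S = V *m diagf d *m V^T ->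
  S = V *m diagf (fun i => Num.sqrt (d i)) *m V^T.
Proof.
move=> VtV d_ge0 [_ pdS] SS; set s := fun i => Num.sqrt (d i).
have VVt := orthogonal_mulmx_tr VtV.
set W := V^T *m S *m V.
have WW : W *m W = diagf d.
  rewrite /W !mulmxA -(mulmxA _ V V^T) VVt mulmx1 -(mulmxA _ S S) SS.
  by rewrite !mulmxA VtV mul1mx -mulmxA VtV mulmx1.
have Ws : W *m diagf s = diagf s *m W.
  by apply: diagf_sqrt_comm; rewrite -WW mulmxA.
have ss : diagf s *m diagf s = diagf d.
  by rewrite diagfM; apply: eq_diagf => i; rewrite /s -expr2 sqr_sqrtr.
have WsWs0 : (W - diagf s) *m (W + diagf s) = 0.
  by rewrite mulmxDr !mulmxBl WW ss Ws addrA subrK subrr.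
have uWs : W + diagf s \in unitmx.
  apply: posdef_unitmx => x x0.
  rewrite mulmxDr mulmxDl mxE ltr_pwDl ?quad_diagf_ge0 // => [|i]; last exact: sqrtr_ge0.
  have Vx0 : V *m x != 0.
    by apply: contraNneq x0 => Vx; rewrite -[x]mul1mx -VtV -mulmxA Vx mulmx0.
  by have := pdS _ Vx0; rewrite trmx_mul /W !mulmxA.
have W_s : W = diagf s.
  apply/eqP; rewrite -subr_eq0; apply/eqP.
  by rewrite -[W - _]mulmx1 -(mulmxV uWs) mulmxA WsWs0 mul0mx.
by rewrite -W_s /W !mulmxA VVt mul1mx -mulmxA VVt mulmx1.
Qed.

Lemma oneD_mul_gt0 (R : numDomainType) (x a : R) :
  0 <= x -> 0 < a -> 0 < 1 + x * a.
Proof. by move=> x_ge0 a_gt0; rewrite ltr_pwDl // mulr_ge0 // ltW. Qed.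

Section IntegralOfReciprocal.
Local Open Scope classical_set_scope.
Variables (R : realType) (a : R).
Hypothesis a_gt0 : 0 < a.
Notation mu := (@lebesgue_measure R).

Let is_derive_affine (x : R) : is_derive x 1 (fun y : R => 1 + y * a) a.
Proof.
by apply: trigger_derive; rewrite /GRing.scale /= add0r mul1r mulr0 add0r mulr1.
Qed.

Let is_derive_ln_affine (x : R) : 0 <= x ->
  is_derive x 1 (fun y : R => a^-1 * ln (1 + y * a)) (1 + x * a)^-1.
Proof.
move=> x_ge0; have ln' := is_derive1_ln (oneD_mul_gt0 x_ge0 a_gt0).
have := is_deriveZ a^-1
  (@is_derive1_comp _ _ (fun y : R => 1 + y * a) _ _ _ ln' (is_derive_affine x)).
by rewrite /GRing.scale /= mulrCA mulVf ?gt_eqF // mulr1.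
Qed.

Let continuous_inv_affine :
  {within `[0, +oo[, continuous (fun x : R => (1 + x * a)^-1)}.
Proof.
apply: continuous_in_subspaceT => x; rewrite inE /= in_itv /= andbT => x_ge0.
suff : {for x, continuous (fun y : R => (1 + y * a)^-1)} by [].
apply: continuousV; first by rewrite gt_eqF // oneD_mul_gt0.
apply/differentiable_continuous/derivable1_diffP.
by have [] := is_derive_affine x.
Qed.

Lemma integrable_inv_affine (lam : R) :
  mu.-integrable `[0, lam] (EFin \o (fun x => (1 + x * a)^-1)).
Proof.
apply: continuous_compact_integrable; first exact: segment_compact.
apply: continuous_subspaceW continuous_inv_affine.
by move=> x /=; rewrite !in_itv /= => /andP[->].
Qed.

Lemma Rintegral_inv_affine (lam : R) : 0 <= lam ->
  \int[mu]_(x in `[0, lam]) (1 + x * a)^-1 = ln (1 + lam * a) / a.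
Proof.
rewrite le_eqVlt => /predU1P[<-|lam_gt0].
  by rewrite set_itv1 Rintegral_set1 mul0r addr0 ln1 mul0r.
set F := fun y : R => a^-1 * ln (1 + y * a).
have contF (x : R) : 0 <= x -> {for x, continuous F}.
  move=> x_ge0; apply/differentiable_continuous/derivable1_diffP.
  by have [] := is_derive_ln_affine x_ge0.
rewrite /Rintegral (@continuous_FTC2 _ _ F) //=.
- by rewrite /F mul0r addr0 ln1 mulr0 subr0 mulrC.
- apply: continuous_subspaceW continuous_inv_affine.
  by move=> x /=; rewrite !in_itv /= => /andP[->].
- split.
  + move=> x; rewrite in_itv /= => /andP[/ltW x_ge0 _].
    by have [] := is_derive_ln_affine x_ge0.
  + by apply/cvg_at_right_filter; exact: contF.
  + by apply/cvg_at_left_filter; exact/contF/ltW.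
- move=> x; rewrite in_itv /= => /andP[/ltW x_ge0 _].
  by rewrite derive1E; have [_ ->] := is_derive_ln_affine x_ge0.
Qed.

End IntegralOfReciprocal.

Lemma Rintegral_sum (R : realType) (I : Type) (s : seq I) (f : I -> R -> R) (D : set R) :
  measurable D ->
  (forall k, (@lebesgue_measure R).-integrable D (EFin \o f k)) ->
  \int[lebesgue_measure]_(x in D) (\sum_(k <- s) f k x) =
  \sum_(k <- s) \int[lebesgue_measure]_(x in D) f k x.
Proof.
move=> mD intf; elim: s => [|k s IHs].
  under eq_Rintegral do rewrite big_nil.
  by rewrite Rintegral_cst // mul0r big_nil.
under eq_Rintegral do rewrite big_cons.
rewrite big_cons -IHs RintegralD //.
have := integrable_sum (mu := lebesgue_measure) mD s (P := xpredT)
  (h := fun i x => (f i x)%:E) (fun i _ => intf i).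
by apply: eq_integrable => // x _; rewrite /= sumEFin.
Qed.

Section ExponentialOfFactoredMatrix.
Variables (R : realType) (m n : nat) (E : 'M[R]_(m, n)) (Ft : 'M[R]_(n, m)).
Variable a : 'I_n -> R.
Hypothesis FtE : Ft *m E = diagf a.
Hypothesis a_neq0 : forall k, a k != 0.

Lemma factored_mulmx u w :
  E *m diagf u *m Ft *m (E *m diagf w *m Ft) =
  E *m diagf (fun k => u k * a k * w k) *m Ft.
Proof.
by rewrite !mulmxA -(mulmxA _ Ft E) FtE -(mulmxA E) diagfM -(mulmxA E) diagfM.
Qed.

Lemma mxpow_factored g k :
  mxpow (E *m diagf g *m Ft) k.+1 =
  E *m diagf (fun l => (a l * g l) ^+ k.+1 / a l) *m Ft.
Proof.
elim: k => [|k IHk].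
  rewrite /mxpow /= mulmx1; congr (_ *m _ *m _); apply: eq_diagf => l.
  by rewrite expr1 mulrC mulKf.
rewrite [LHS]/mxpow iterS -/(mxpow _ k.+1) IHk factored_mulmx.
congr (_ *m _ *m _); apply: eq_diagf => l.
by rewrite [in RHS]exprS; move: (_ ^+ k.+1) => x; ring.
Qed.

Lemma exp_partial_sum_factored g N :
  \sum_(k < N.+1) (k`!%:R)^-1 *: mxpow (E *m diagf g *m Ft) k =
  1%:M + E *m diagf (fun l => (series (exp_coeff (a l * g l)) N.+1 - 1) / a l) *m Ft.
Proof.
elim: N => [|N IHN].
  rewrite big_ord1 /= invr1 scale1r (@eq_diagf _ _ _ (fun _ => 0)) => [|l].
    by rewrite diagf0 mulmx0 mul0mx addr0.
  by rewrite /series /= big_nat1 /exp_coeff /= expr0 divr1 subrr mul0r.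
rewrite big_ord_recr IHN mxpow_factored /= -addrA; congr (_ + _).
rewrite scalemxAl scalemxAr diagfZ -mulmxDl -mulmxDr diagfD.
congr (_ *m _ *m _); apply: eq_diagf => l; rewrite [in RHS]seriesSr /exp_coeff /=.
by move: (series _ _) ((a l * g l) ^+ N.+1) ((N.+1)`!%:R) => x y z; ring.
Qed.

Lemma mxexp_factored g :
  mxexp (E *m diagf g *m Ft) =
  1%:M + E *m diagf (fun l => (expR (a l * g l) - 1) / a l) *m Ft.
Proof.
apply/matrixP => i j; rewrite mxE; apply: cvg_lim => //.
rewrite -(cvg_shiftS (fun N => _ i j)) /=.
under eq_fun do rewrite exp_partial_sum_factored mxE mulmx_diagfE.
rewrite mxE mulmx_diagfE; apply: cvgD; first exact: cvg_cst.
apply: (@cvg_big R _ +%R 0 xpredT add_continuous) => // l _.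
apply: cvgMr_tmp; apply: cvgMl_tmp; apply: cvgMr_tmp; apply: cvgB; last exact: cvg_cst.
rewrite (cvg_shiftS (fun N => series (exp_coeff (a l * g l)) N)).
exact: is_cvg_series_exp_coeff.
Qed.

End ExponentialOfFactoredMatrix.

Definition edh_omega (R : realType) n (a : 'I_n -> R) (lam : R) (i : 'I_n) : R :=
  ((1 + lam * a i)^-1 `^ 2^-1 - 1) / a i.

Section EDHFlow.
Variables (R : realType) (nx nz : nat).
Variables (P : 'M[R]_nx) (Rm : 'M[R]_nz) (H : 'M[R]_(nz, nx)).
Variables (Rh V : 'M[R]_nz) (a : 'I_nz -> R).
Hypothesis Rh_unit : Rh \in unitmx.
Hypothesis RhRh : Rh *m Rh = Rm.
Hypothesis VtV : V^T *m V = 1%:M.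
Hypothesis D_eigen : invmx Rh *m H *m P *m H^T *m invmx Rh = V *m diagf a *m V^T.
Hypothesis a_gt0 : forall i, 0 < a i.

Let E := P *m H^T *m invmx Rh *m V.
Let Ft := V^T *m invmx Rh *m H.

Lemma edh_FtE : Ft *m E = diagf a.
Proof.
have -> : Ft *m E = V^T *m (invmx Rh *m H *m P *m H^T *m invmx Rh) *m V.
  by rewrite /Ft /E !mulmxA.
by rewrite D_eigen !mulmxA VtV mul1mx -mulmxA VtV mulmx1.
Qed.

(* mu H P H^T + R = R^{1/2} (I + mu D) R^{1/2}, and I + mu D is diagonalised by V. *)
Lemma invmx_edh_gain (mu : R) : 0 <= mu ->
  invmx (mu *: (H *m P *m H^T) + Rm) =
  invmx Rh *m (V *m diagf (fun k => (1 + mu * a k)^-1) *m V^T) *m invmx Rh.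
Proof.
move=> mu_ge0; apply: mulmx1_invmx.
have -> : mu *: (H *m P *m H^T) + Rm =
          Rh *m (1%:M + mu *: (V *m diagf a *m V^T)) *m Rh.
  rewrite -D_eigen mulmxDr mulmxDl mulmx1 RhRh addrC -scalemxAr -scalemxAl.
  by rewrite !mulmxA mulmxV // mul1mx mulmxKV.
rewrite conj_diagf_scale_add1 // -!mulmxA mulKVmx //.
rewrite !mulmxA -(mulmxA _ V^T V) VtV mulmx1.
rewrite -(mulmxA (Rh *m V)) diagfM (@eq_diagf _ _ _ (fun _ => 1)) => [|k].
  by rewrite diagf1 mulmx1 -(mulmxA Rh) orthogonal_mulmx_tr // mulmx1 mulmxV.
by rewrite mulfV // gt_eqF // oneD_mul_gt0.
Qed.

Lemma edhA_factored (mu : R) : 0 <= mu ->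
  edhA P Rm H mu = E *m diagf (fun k => - 2^-1 * (1 + mu * a k)^-1) *m Ft.
Proof.
move=> mu_ge0; rewrite /edhA invmx_edh_gain // -diagfZ /E /Ft.
by rewrite -!scalemxAr -!scalemxAl !mulmxA.
Qed.

Lemma mxint_edhA (lam : R) : 0 <= lam ->
  mxint (edhA P Rm H) 0 lam =
  E *m diagf (fun k => - 2^-1 * (ln (1 + lam * a k) / a k)) *m Ft.
Proof.
move=> lam_ge0; apply/matrixP => i j; rewrite mxE mulmx_diagfE.
transitivity (\int[lebesgue_measure]_(x in `[0, lam]%classic)
    \sum_(k <- index_enum 'I_nz) (E i k * - 2^-1 * Ft k j * (1 + x * a k)^-1)).
  apply: eq_Rintegral => x; rewrite inE /= in_itv /= => /andP[x_ge0 _].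
  rewrite edhA_factored // mulmx_diagfE; apply: eq_bigr => k _.
  by rewrite mulrA -[RHS]mulrA [Ft k j * _]mulrC mulrA.
rewrite Rintegral_sum //; last first.
  move=> k; have := integrable_inv_affine (a_gt0 k) lam.
  move/(integrableZl _ (E i k * - 2^-1 * Ft k j)) => /(_ (measurable_itv _)).
  by apply: eq_integrable => // x _; rewrite /= EFinM.
apply: eq_bigr => k _; rewrite RintegralZl //; last exact: integrable_inv_affine.
by rewrite Rintegral_inv_affine //; ring.
Qed.

Lemma edhPhi_factored (lam : R) : 0 <= lam ->
  edhPhi P Rm H lam = 1%:M + E *m diagf (edh_omega a lam) *m Ft.
Proof.
move=> lam_ge0; rewrite /edhPhi mxint_edhA // (mxexp_factored edh_FtE); last first.
  by move=> k; rewrite gt_eqF.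
congr (_ + _ *m _ *m _); apply: eq_diagf => k; rewrite /edh_omega.
have pos := oneD_mul_gt0 lam_ge0 (a_gt0 k).
rewrite /powR invr_eq0 gt_eqF // lnV ?posrE //; congr ((expR _ - 1) / _).
by field; rewrite gt_eqF.
Qed.

Lemma edh_inv_sqrt_sub1_mulmx (lam : R) (S : 'M[R]_nz) : 0 <= lam ->
  sym_posdef S ->
  S *m S = 1%:M + lam *: (invmx Rh *m H *m P *m H^T *m invmx Rh) ->
  (invmx S - 1%:M) *m invmx (invmx Rh *m H *m P *m H^T *m invmx Rh) =
  V *m diagf (edh_omega a lam) *m V^T.
Proof.
move=> lam_ge0 S_pd SS.
have pos k := oneD_mul_gt0 lam_ge0 (a_gt0 k).
rewrite D_eigen conj_diagf_scale_add1 // in SS.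
have -> := posdef_sqrt_unique VtV (fun k => ltW (pos k)) S_pd SS.
rewrite D_eigen (invmx_conj_diagf VtV (w := fun k => (Num.sqrt (1 + lam * a k))^-1));
  last by move=> k; rewrite mulfV // gt_eqF // sqrtr_gt0.
rewrite (invmx_conj_diagf VtV (w := fun k => (a k)^-1));
  last by move=> k; rewrite mulfV // gt_eqF.
have -> : 1%:M = V *m diagf (fun _ => 1) *m V^T.
  by rewrite diagf1 mulmx1 orthogonal_mulmx_tr.
rewrite -mulmxBl -mulmxBr diagfB conj_diagfM //.
congr (_ *m _ *m _); apply: eq_diagf => k.
by rewrite /edh_omega powR12_sqrt ?invr_ge0 ?ltW // sqrtrV // ltW.
Qed.

End EDHFlow.

Theorem mainTheorem2 (R : realType) (nx nz : nat)
  (P : 'M[R]_nx) (Rm : 'M[R]_nz) (H : 'M[R]_(nz, nx))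
  (Rh : 'M[R]_nz) (V : 'M[R]_nz) (alpha : 'rV[R]_nz)
  (Sq : R -> 'M[R]_nz) :
  sym_posdef P -> sym_posdef Rm -> \rank H = nz ->
  sym_posdef Rh -> Rh *m Rh = Rm ->
  V^T *m V = 1%:M ->
  invmx Rh *m H *m P *m H^T *m invmx Rh = V *m diag_mx alpha *m V^T ->
  (forall i, 0 < alpha 0 i) ->
  (forall lam : R, 0 <= lam <= 1 ->
     sym_posdef (Sq lam) /\
     Sq lam *m Sq lam = 1%:M + lam *: (invmx Rh *m H *m P *m H^T *m invmx Rh)) ->
  forall lam : R, 0 <= lam <= 1 ->
    edhPhi P Rm H lam =
      1%:M + P *m H^T *m invmx Rh *m (invmx (Sq lam) - 1%:M)
             *m invmx (invmx Rh *m H *m P *m H^T *m invmx Rh) *m invmx Rh *m H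
    /\
    edhPhi P Rm H lam =
      1%:M + (P *m H^T *m invmx Rh *m V)
             *m diag_mx (\row_i (((1 + lam * alpha 0 i) ^-1 `^ 2^-1 - 1) / alpha 0 i))
             *m (V^T *m invmx Rh *m H).
Proof.
(* Positivity of P, R and the rank of H only serve to guarantee the assumed
   eigendecomposition of D with alpha > 0. *)
move=> _ _ _ [_ Rh_pd] RhRh VtV D_eigen alpha_gt0 Sq_sqrt lam lam01.
have [lam_ge0 _] := andP lam01; have [Sq_pd SqSq] := Sq_sqrt lam lam01.
have Rh_unit := posdef_unitmx Rh_pd.
have alpha_diagf : diag_mx alpha = diagf (fun i => alpha 0 i).
  by congr diag_mx; apply/rowP => i; rewrite mxE.
rewrite alpha_diagf in D_eigen.
have Phi := edhPhi_factored Rh_unit RhRh VtV D_eigen alpha_gt0 lam_ge0.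
split; last exact: Phi.
rewrite Phi -[in RHS](mulmxA (P *m H^T *m invmx Rh)).
by rewrite (edh_inv_sqrt_sub1_mulmx VtV D_eigen alpha_gt0 lam_ge0 Sq_pd SqSq) !mulmxA.
Qed.
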